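(* Let $U=(E,\mathcal{D},\rho)$ and $U'=(E,\mathcal{D}',\rho')$ be U-matroids, with base polyhedra $\mathfrak p=\mathcal{B}(U)$ and $\mathfrak p'=\mathcal{B}(U')$. Then $U'$ is a lattice extension of $U$ (i.e. $\mathcal{D}\subseteq\mathcal{D}'$ and $\rho'|_{\mathcal{D}}=\rho$) if and only if $\mathfrak p'$ is a sheared polyhedron of $\mathfrak p$, i.e. $\mathfrak p'\subseteq\mathfrak p$ and the vertex set of $\mathfrak p'$ contains the vertex set of $\mathfrak p$.
   Context: A U-matroid is a triple $(E,\mathcal{D},\rho)$ with $E$ finite, $\mathcal{D}\subseteq2^E$ an accessible distributive lattice of sets, and $\rho:\mathcal{D}\to\mathbb{N}$ with $\rho(\emptyset)=0$, monotone, submodular, with unit increase. Its base polyhedron is $\mathcal{B}(U)=\{\mathbf{x}\in\mathbb{R}^E:\mathbf{x}(A)\le\rho(A)\ \forall A\in\mathcal{D},\ \mathbf{x}(E)=\rho(E)\}$. *)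

From HB Require Import structures.
From mathcomp Require Import all_boot all_order all_algebra.
From mathcomp Require Import reals.
Set Implicit Arguments. Unset Strict Implicit. Unset Printing Implicit Defensive.
Import Order.TTheory GRing.Theory Num.Theory.
Local Open Scope ring_scope.

Section UMatroid.
Variable E : finType.

Definition accessible_distr_lattice (D : {set {set E}}) : Prop :=
  [/\ set0 \in D, [set: E] \in D,
      (forall A B, A \in D -> B \in D -> A :|: B \in D),
      (forall A B, A \in D -> B \in D -> A :&: B \in D) &
      (forall A, A \in D -> A != set0 -> exists2 a, a \in A & A :\ a \in D)].

(* U-matroid (E, D, rho); rho is only relevant on D. *)
Definition is_Umatroid (D : {set {set E}}) (rho : {set E} -> nat) : Prop :=
  [/\ accessible_distr_lattice D,
      rho set0 = 0%N,
      (forall A B, A \in D -> B \in D -> A \subset B -> (rho A <= rho B)%N),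
      (forall A B, A \in D -> B \in D ->
         (rho (A :|: B) + rho (A :&: B) <= rho A + rho B)%N) &
      (forall A a, A \in D -> A :|: [set a] \in D ->
         (rho (A :|: [set a]) <= (rho A).+1)%N)].

Definition lattice_extension (D : {set {set E}}) (rho : {set E} -> nat)
    (D' : {set {set E}}) (rho' : {set E} -> nat) : Prop :=
  D \subset D' /\ (forall A, A \in D -> rho' A = rho A).

Variable R : realType.

Definition xsum (x : E -> R) (A : {set E}) : R := \sum_(e in A) x e.

Definition base_polyhedron (D : {set {set E}}) (rho : {set E} -> nat)
    (x : E -> R) : Prop :=
  (forall A, A \in D -> xsum x A <= (rho A)%:R) /\
  xsum x [set: E] = (rho [set: E])%:R.

Definition is_vertex (P : (E -> R) -> Prop) (x : E -> R) : Prop :=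
  P x /\ forall (y z : E -> R) (t : R), P y -> P z -> 0 < t -> t < 1 ->
    (forall e, x e = t * y e + (1 - t) * z e) -> y = z.

Definition sheared (P P' : (E -> R) -> Prop) : Prop :=
  (forall x, P' x -> P x) /\ (forall x, is_vertex P x -> is_vertex P' x).

End UMatroid.

From HB Require Import structures.
From mathcomp Require Import all_boot all_order all_algebra.
From mathcomp Require Import reals.
From mathcomp Require Import lra.
From Stdlib Require Import FunctionalExtensionality.
Set Implicit Arguments.
Unset Strict Implicit.
Unset Printing Implicit Defensive.
Import Order.TTheory GRing.Theory Num.Theory.
Local Open Scope ring_scope.

(* The tight sets {X in D | x(X) = rho(X)} of a point x of B(U) form a
   sublattice of D, and x is a vertex exactly when they contain a chain from
   set0 to E growing by one element at a time: points y, z with x in ]y, z[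
   are tight along such a chain, hence equal; and the tight sets of a vertex
   separate points.  Such a chain, if tight for another submodular rank, also
   puts x into that rank's base polyhedron (peel the chain one element at a
   time and use submodularity).  So when U' extends U, every vertex of B(U)
   lies in B(U').  In the other direction, greedy vectors along maximal chains
   of D through A are vertices of B(U) tight at A, which compares rho and rho'
   at A; and if A is in D but not in D', some j in A forces some i outside A
   in every member of D', so shifting weight from i to j in such a vertex
   stays in B(U') but leaves B(U). *)

Lemma take_filter_prefix (T : Type) (p : pred T) (s : seq T) j :
  exists m, take j (filter p s) = filter p (take m s).
Proof.
elim: s j => [|a s IH] [|j]; try by exists 0; rewrite ?take0.
rewrite /=; case pa: (p a) => /=.
  by have [m ->] := IH j; exists m.+1; rewrite /= pa.
by have [m ->] := IH j.+1; exists m.+1; rewrite /= pa.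
Qed.

Section Polyhedra.
Variables (R : realType) (E : finType).
Implicit Types (x y z : E -> R) (A B T X : {set E}).

Lemma xsum0 x : xsum x set0 = 0.
Proof. by rewrite /xsum big_set0. Qed.

Lemma xsumD1 x e T : e \in T -> xsum x T = x e + xsum x (T :\ e).
Proof. by move=> eT; rewrite /xsum (big_setD1 e eT). Qed.

Lemma xsum_setUI x A B :
  xsum x (A :|: B) + xsum x (A :&: B) = xsum x A + xsum x B.
Proof.
rewrite /xsum (big_setID (A := A :|: B) B) (big_setID (A := A) B) /=.
rewrite [(A :|: B) :&: B]setIC setKU setDUl setDv setU0; lra.
Qed.

Lemma xsum_convex x y z (t : R) A :
  (forall e, x e = t * y e + (1 - t) * z e) ->
  xsum x A = t * xsum y A + (1 - t) * xsum z A.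
Proof.
move=> xE; rewrite /xsum (eq_bigr _ (fun e _ => xE e)) big_split /=.
by rewrite -!mulr_sumr.
Qed.

Lemma convex_eq_bound (a b r t : R) : 0 < t -> t < 1 ->
  a <= r -> b <= r -> t * a + (1 - t) * b = r -> a = r /\ b = r.
Proof. move=> t0 t1 ar br abr; split; nra. Qed.

Definition shift x (j i : E) (c : R) : E -> R :=
  fun e => x e + c * ((e == j)%:R - (e == i)%:R).

Lemma xsum_shift x j i c A :
  xsum (shift x j i c) A = xsum x A + c * ((j \in A)%:R - (i \in A)%:R).
Proof.
have sum_delta k : \sum_(e in A) ((e == k)%:R : R) = (k \in A)%:R.
  case: (boolP (k \in A)) => kA; last first.
    by rewrite big1 // => e eA; case: eqP => // ek; rewrite -ek eA in kA.
  by rewrite (bigD1 k) //= eqxx big1 ?addr0 // => e /andP [_ /negbTE ->].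
by rewrite /xsum big_split /= -mulr_sumr sumrB !sum_delta.
Qed.

Definition accessible_family (F : {set E} -> Prop) :=
  forall T, F T -> T != set0 -> exists2 e, e \in T & F (T :\ e).

Lemma accessible_family_ind (F P : {set E} -> Prop) :
  accessible_family F -> P set0 ->
  (forall T e, F T -> e \in T -> F (T :\ e) -> P (T :\ e) -> P T) ->
  forall T, F T -> P T.
Proof.
move=> accF P0 PS T.
elim: {T}#|T| {-2}T (erefl #|T|) => [|n IH] T cardT FT.
  by rewrite (cards0_eq cardT).
have [e eT FTe] : exists2 e, e \in T & F (T :\ e).
  by apply: accF FT _; rewrite -card_gt0 cardT.
apply: (PS T e FT eT FTe); apply: IH FTe.
by move: cardT; rewrite (cardsD1 e) eT add1n => -[].
Qed.

Lemma is_vertex_sub (P P' : (E -> R) -> Prop) x :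
  (forall y, P' y -> P y) -> P' x -> is_vertex P x -> is_vertex P' x.
Proof.
by move=> sub P'x [_ ext]; split=> // y z t /sub Py /sub Pz; exact: ext.
Qed.

Definition tight (D : {set {set E}}) (rho : {set E} -> nat) x X :=
  (X \in D) && (xsum x X == (rho X)%:R).

Definition prefix_set (s : seq E) k : {set E} := [set e in take k s].

(* A word all of whose prefixes lie in D encodes a chain of D growing by one
   element at a time. *)
Definition feasible_word (D : {set {set E}}) (s : seq E) :=
  uniq s /\ forall k, prefix_set s k \in D.

Definition greedy (rho : {set E} -> nat) (s : seq E) : E -> R :=
  fun e => (rho (prefix_set s (index e s).+1))%:R
           - (rho (prefix_set s (index e s)))%:R.

Lemma prefix_set0 s : prefix_set s 0 = set0.
Proof. by apply/setP => e; rewrite !inE take0. Qed.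

Lemma prefix_set_size s : prefix_set s (size s) = [set e in s].
Proof. by rewrite /prefix_set take_size. Qed.

Lemma prefix_set_succ s k : uniq s -> (k < size s)%N ->
  exists e, [/\ index e s = k, e \notin prefix_set s k
              & prefix_set s k.+1 = e |: prefix_set s k].
Proof.
move=> us ks; have e0 : E by case: s us ks => // e0.
exists (nth e0 s k); rewrite index_uniq // /prefix_set (take_nth e0 ks).
split=> //; last by apply/setP => e; rewrite !inE mem_rcons inE.
have := take_uniq k.+1 us.
by rewrite (take_nth e0 ks) rcons_uniq inE => /andP [].
Qed.

Lemma prefix_accessible s : uniq s ->
  accessible_family (fun T => exists2 k, (k <= size s)%N & T = prefix_set s k).
Proof.
move=> us T [[|k] ks ->]; first by rewrite prefix_set0 eqxx.
have [e [_ ek ->]] := prefix_set_succ us ks.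
by exists e; [rewrite setU11 | exists k; [exact: ltnW | rewrite setU1K]].
Qed.

Lemma xsum_greedy rho s k : rho set0 = 0%N -> uniq s ->
  xsum (greedy rho s) (prefix_set s k) = (rho (prefix_set s k))%:R.
Proof.
move=> rho0 us; elim: k => [|k IH]; first by rewrite prefix_set0 xsum0 rho0.
case: (ltnP k (size s)) => ks; last first.
  by rewrite /prefix_set !take_oversize ?leqW in IH *.
have [e [ke ek kE]] := prefix_set_succ us ks.
rewrite {1}kE /xsum big_setU1 //= -/(xsum _ _) IH /greedy ke.
by rewrite subrK.
Qed.

Section Lattice.
Variables (D : {set {set E}}) (rho : {set E} -> nat).
Hypothesis set0_in_D : set0 \in D.
Hypothesis setT_in_D : setT \in D.
Hypothesis setU_closed : forall A B, A \in D -> B \in D -> A :|: B \in D.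
Hypothesis setI_closed : forall A B, A \in D -> B \in D -> A :&: B \in D.
Hypothesis D_accessible : accessible_family (fun A => A \in D).
Hypothesis rho0 : rho set0 = 0%N.
Hypothesis rho_submod : forall A B, A \in D -> B \in D ->
  (rho (A :|: B) + rho (A :&: B) <= rho A + rho B)%N.

Local Notation base := (base_polyhedron D rho).

Lemma base_polyhedron_of_tight_family x F : accessible_family F ->
  (forall T, F T -> tight D rho x T) -> F setT -> base x.
Proof.
move=> accF tightF FT.
have le_rho_in : forall T, F T ->
    forall B, B \in D -> xsum x (B :&: T) <= (rho (B :&: T))%:R.
  apply: (accessible_family_ind accF) => [B _|{}T e FT' eT FTe IH B BD].
    by rewrite setI0 xsum0.
  have /andP [TD /eqP xT] := tightF _ FT'.
  have /andP [TeD /eqP xTe] := tightF _ FTe.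
  case: (boolP (e \in B)) => eB; last first.
    suff <- : B :&: (T :\ e) = B :&: T by exact: IH.
    by apply/setP => g; rewrite !inE; case: eqP => // ->; rewrite (negbTE eB).
  (* submodularity on B :&: T and T :\ e bounds x e from above *)
  have := rho_submod (setI_closed BD TD) TeD.
  have -> : (B :&: T) :|: (T :\ e) = T.
    apply/setP => g; rewrite !inE.
    case: eqP => [->|_]; rewrite ?eB ?eT //=.
    by case: (g \in B); case: (g \in T).
  rewrite -setIA (setIidPr (subD1set T e)) -(ler_nat R) !natrD => submod.
  have := IH B BD; have := xsumD1 x eT.
  have eBT : e \in B :&: T by rewrite inE eB eT.
  by rewrite (xsumD1 x eBT) -setIDA; lra.
split; last by have /andP [_ /eqP] := tightF _ FT.
by move=> A AD; rewrite -[A]setIT; exact: le_rho_in.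
Qed.

Lemma vertex_of_tight_family x F : base x -> accessible_family F ->
  (forall T, F T -> tight D rho x T) -> F setT -> is_vertex base x.
Proof.
move=> bx accF tightF FT; split=> // y z t [le_y _] [le_z _] t0 t1 xE.
have tight_yz T : F T -> xsum y T = (rho T)%:R /\ xsum z T = (rho T)%:R.
  move=> FT'; have /andP [TD /eqP xT] := tightF _ FT'.
  apply: convex_eq_bound t0 t1 (le_y _ TD) (le_z _ TD) _.
  by rewrite -(xsum_convex _ xE).
have agree : forall T, F T -> {in T, y =1 z}.
  apply: (accessible_family_ind accF) => [g|{}T e FT' eT FTe IH g gT].
    by rewrite inE.
  case: (eqVneq g e) => [->|ge]; last by apply: IH; rewrite !inE ge.
  have [yT zT] := tight_yz _ FT'; have [yTe zTe] := tight_yz _ FTe.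
  move: yT zT; rewrite !(xsumD1 _ eT); lra.
by apply: functional_extensionality => e; apply: agree FT _ (in_setT e).
Qed.

Lemma base_polyhedron_shift x j i c :
  (forall X, X \in D -> j \in X -> i \in X) -> 0 <= c -> base x ->
  base (shift x j i c).
Proof.
move=> ji c0 [le_rho sumE]; split; last first.
  by rewrite xsum_shift !in_setT subrr mulr0 addr0.
move=> X XD; rewrite xsum_shift.
have := le_rho _ XD; case: (boolP (j \in X)) => jX.
  by rewrite (ji _ XD jX) subrr mulr0 addr0.
case: (i \in X) => /=; nra.
Qed.

Lemma tight_setUI x A B : base x -> tight D rho x A -> tight D rho x B ->
  tight D rho x (A :|: B) /\ tight D rho x (A :&: B).
Proof.
move=> [le_rho _] /andP [AD /eqP xA] /andP [BD /eqP xB].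
have UD := setU_closed AD BD; have ID := setI_closed AD BD.
have := rho_submod AD BD; rewrite -(ler_nat R) !natrD => submod.
have := le_rho _ UD; have := le_rho _ ID; have := xsum_setUI x A B.
by rewrite /tight UD ID /= => *; split; apply/eqP; lra.
Qed.

Lemma vertex_tight_separates x e f : is_vertex base x -> e != f ->
  [exists X, tight D rho x X && ((e \in X) != (f \in X))].
Proof.
move=> [[le_rho sumE] extreme] nef; apply: contraT; rewrite negb_exists.
move=> /forallP nosep.
have same X : tight D rho x X -> (e \in X) = (f \in X).
  by move=> tX; apply/eqP; have := nosep X; rewrite tX /= negbK.
(* otherwise x can be moved by +-eps along 1_e - 1_f inside the polyhedron *)
pose slack X := (rho X)%:R - xsum x X.
pose eps := \big[Num.min/1]_(X | (X \in D) && ~~ tight D rho x X) slack X.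
have eps_gt0 : 0 < eps.
  apply: (big_ind (fun m => 0 < m)) => [|a b a0 b0|X /andP [XD ntX]].
  - exact: ltr01.
  - by rewrite lt_min a0 b0.
  by rewrite subr_gt0 lt_neqAle le_rho // andbT; move: ntX; rewrite /tight XD.
have in_base c : - eps <= c <= eps -> base (shift x e f c).
  move=> /andP [lo hi]; split=> [A AD|]; last first.
    by rewrite xsum_shift !in_setT subrr mulr0 addr0.
  rewrite xsum_shift.
  case: (boolP (tight D rho x A)) => tA.
    by rewrite (same _ tA) subrr mulr0 addr0 le_rho.
  have : eps <= slack A by apply: bigmin_le_cond; rewrite AD tA.
  by rewrite /slack; case: (e \in A); case: (f \in A) => /=; lra.
have /(congr1 (fun y => y e)) : shift x e f eps = shift x e f (- eps).
  apply: (extreme _ _ (1 / 2)); try (apply: in_base); try lra.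
  by move=> g; rewrite /shift; lra.
by rewrite /shift eqxx (negbTE nef) /=; lra.
Qed.

Lemma vertex_tight_accessible x : is_vertex base x ->
  accessible_family (tight D rho x).
Proof.
move=> vx T tT T0.
have tight0 : tight D rho x set0 && (set0 \proper T).
  by rewrite /tight set0_in_D xsum0 rho0 eqxx proper0 T0.
(* S is a largest tight proper subset of T; a tight set separating two points
   of T :\: S would enlarge it, so T :\: S is a singleton. *)
pose P S := tight D rho x S && (S \proper T).
case: (@arg_maxnP _ set0 P (fun S => #|S|) tight0) => S /andP [tS ST] S_max.
have [/subsetP ST' [e eT eS]] := properP ST.
have unsplit a b X : a \in T :\: S -> b \in T :\: S -> tight D rho x X ->
    a \in X -> b \in X.
  move=> /setDP [aT aS] /setDP [bT bS] tX aX; apply: contraT => bX.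
  have [tSX _] := tight_setUI vx.1 tS (tight_setUI vx.1 tX tT).2.
  have SX_T : S :|: X :&: T \proper T.
    rewrite properE subUset proper_sub ?subsetIr //=.
    by apply/subsetPn; exists b; rewrite ?inE ?(negbTE bS) ?(negbTE bX).
  have S_lt : (#|S| < #|S :|: X :&: T|)%N.
    rewrite proper_card // properE subsetUl; apply/subsetPn.
    by exists a; rewrite ?inE ?aX ?aT ?orbT.
  by have := S_max _ (introT andP (conj tSX SX_T)); rewrite /= leqNgt S_lt.
exists e => //; suff -> : T :\ e = S by [].
apply/setP => g; rewrite !inE.
case: (eqVneq g e) => [->|ge] /=; first by rewrite (negbTE eS).
apply/idP/idP => [gT|/ST'] //; apply: contraT => gS.
have eTS : e \in T :\: S by rewrite inE eS eT.
have gTS : g \in T :\: S by rewrite inE gS gT.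
have /existsP [X /andP [tX]] := vertex_tight_separates vx ge.
case: (boolP (g \in X)) => gX; case: (boolP (e \in X)) => eX //= _.
  by have := unsplit _ _ _ gTS eTS tX gX; rewrite (negbTE eX).
by have := unsplit _ _ _ eTS gTS tX eX; rewrite (negbTE gX).
Qed.

Lemma greedy_vertex s : feasible_word D s -> [set e in s] = setT ->
  is_vertex base (greedy rho s).
Proof.
move=> [us preD] sT.
pose F T := exists2 k, (k <= size s)%N & T = prefix_set s k.
have tightF T : F T -> tight D rho (greedy rho s) T.
  by move=> [k _ ->]; rewrite /tight preD xsum_greedy ?eqxx.
have FT : F setT by exists (size s); rewrite ?prefix_set_size ?sT.
have accF := prefix_accessible us.
have bx := base_polyhedron_of_tight_family accF tightF FT.
exact: vertex_of_tight_family bx accF tightF FT.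
Qed.

Lemma feasible_word_of_mem A : A \in D ->
  exists2 s, feasible_word D s & [set e in s] = A.
Proof.
move: A; apply: (accessible_family_ind D_accessible).
  exists [::]; first by split=> // k; rewrite prefix_set0.
  by apply/setP => e; rewrite !inE.
move=> A e AD eA AeD [s [us preD] sAe].
have es : e \notin s by rewrite -[_ \in s]in_set sAe !inE eqxx.
have sA : [set g in rcons s e] = A.
  by rewrite -(setD1K eA) -sAe; apply/setP => g; rewrite !inE mem_rcons inE.
exists (rcons s e) => //; split; first by rewrite rcons_uniq es.
move=> k; rewrite /prefix_set -cats1 take_cat.
case: ltnP => _; first exact: preD.
case: (k - size s)%N => [|m] /=; first by rewrite cats0 -prefix_set_size.
by rewrite cats1 sA.
Qed.

Lemma feasible_word_through A : A \in D ->
  exists s, [/\ feasible_word D s, [set e in s] = setT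
              & exists k, prefix_set s k = A].
Proof.
move=> AD.
have [sA [usA preA] sAA] := feasible_word_of_mem AD.
have [t [ut pret] tT] := feasible_word_of_mem setT_in_D.
have memA g : (g \in sA) = (g \in A) by rewrite -sAA inE.
have cat_set v :
    [set e in sA ++ [seq e <- v | e \notin A]] = A :|: [set e in v].
  by apply/setP => g; rewrite !inE mem_cat mem_filter memA; case: (g \in A).
exists (sA ++ [seq e <- t | e \notin A]); split.
- split.
    rewrite cat_uniq usA filter_uniq // andbT.
    by apply/hasPn => g; rewrite mem_filter memA => /andP [].
  move=> k; rewrite /prefix_set take_cat; case: ltnP => _; first exact: preA.
  have [m ->] := take_filter_prefix (fun e => e \notin A) t (k - size sA).
  by rewrite cat_set; apply: setU_closed AD (pret m).
- by rewrite cat_set tT setUT.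
- by exists (size sA); rewrite /prefix_set take_size_cat.
Qed.

Lemma exists_tight_vertex A : A \in D ->
  exists2 x : E -> R, is_vertex base x & xsum x A = (rho A)%:R.
Proof.
move=> AD; have [s [fs sT [k <-]]] := feasible_word_through AD.
by exists (greedy rho s); [exact: greedy_vertex | exact: xsum_greedy fs.1].
Qed.

Lemma notin_lattice_forced_pair A : A \notin D ->
  exists j i,
    [/\ j \in A, i \notin A & forall X, X \in D -> j \in X -> i \in X].
Proof.
move=> AD.
pose cl j := \bigcap_(X in D | j \in X) X.
have cl_in j : cl j \in D.
  by apply: (big_ind (fun X => X \in D)) => // X /andP [].
have cl_sub j X : X \in D -> j \in X -> cl j \subset X.
  by move=> XD jX; apply: bigcap_inf; rewrite XD jX.
(* a member of D is the union of the closures of its elements *)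
case: (boolP [forall j in A, cl j \subset A]) => [/forall_inP clA | ].
  case/negP: AD; suff -> : A = \bigcup_(j in A) cl j.
    exact: (big_ind (fun X => X \in D)).
  apply/setP => g; apply/idP/bigcupP => [gA | [j jA gj]].
    by exists g => //; apply/bigcapP => X /andP [].
  exact: subsetP (clA j jA) g gj.
rewrite negb_forall_in => /exists_inP [j jA /subsetPn [i icl iA]].
by exists j, i; split=> // X XD jX; exact: subsetP (cl_sub j X XD jX) i icl.
Qed.

End Lattice.

End Polyhedra.

Lemma sheared_of_lattice_extension (R : realType) (E : finType)
    (D D' : {set {set E}}) (rho rho' : {set E} -> nat) :
  is_Umatroid D rho -> is_Umatroid D' rho' ->
  lattice_extension D rho D' rho' ->
  sheared (@base_polyhedron E R D rho) (@base_polyhedron E R D' rho').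
Proof.
move=> [[set0D setTD cupD capD _] rho0 _ submD _].
move=> [[_ _ _ capD' _] _ _ submD' _] [DD' rhoE].
have tight_ext (x : E -> R) T : tight D rho x T -> tight D' rho' x T.
  by move=> /andP [TD xT]; rewrite /tight (subsetP DD') //= rhoE.
have sub (x : E -> R) : base_polyhedron D' rho' x -> base_polyhedron D rho x.
  move=> [le_rho sumE]; split; last by rewrite -rhoE.
  by move=> A AD; rewrite -rhoE //; apply/le_rho/(subsetP DD').
split=> // x vx; apply: (is_vertex_sub sub _ vx).
have accT := vertex_tight_accessible set0D cupD capD rho0 submD vx.
apply: (base_polyhedron_of_tight_family capD' submD' accT (tight_ext x)).
by rewrite /tight setTD vx.1.2 eqxx.
Qed.

Lemma lattice_subset_of_sheared (R : realType) (E : finType)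
    (D D' : {set {set E}}) (rho rho' : {set E} -> nat) :
  is_Umatroid D rho -> is_Umatroid D' rho' ->
  sheared (@base_polyhedron E R D rho) (@base_polyhedron E R D' rho') ->
  D \subset D'.
Proof.
move=> [[set0D setTD cupD capD accD] rho0 _ submD _].
move=> [[set0D' setTD' cupD' capD' _] _ _ _ _] [sub vert].
apply/subsetP => A AD; apply: contraT => AD'.
have [j [i [jA iA ji]]] :=
  notin_lattice_forced_pair set0D' setTD' cupD' capD' AD'.
have [x vx xA] :=
  exists_tight_vertex R set0D setTD cupD capD accD rho0 submD AD.
have /sub [le_rho _] := base_polyhedron_shift ji ler01 (vert _ vx).1.
by have := le_rho A AD; rewrite xsum_shift jA (negbTE iA) xA /=; lra.
Qed.

Lemma rank_eq_of_sheared (R : realType) (E : finType)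
    (D D' : {set {set E}}) (rho rho' : {set E} -> nat) :
  is_Umatroid D rho -> is_Umatroid D' rho' ->
  sheared (@base_polyhedron E R D rho) (@base_polyhedron E R D' rho') ->
  forall A, A \in D -> rho' A = rho A.
Proof.
move=> UD UD' shD A AD.
have AD' := subsetP (lattice_subset_of_sheared UD UD' shD) A AD.
move: UD UD' shD => [[set0D setTD cupD capD accD] rho0 _ submD _].
move=> [[set0D' setTD' cupD' capD' accD'] rho0' _ submD' _] [sub vert].
apply/eqP; rewrite -(eqr_nat R) eq_le; apply/andP; split.
  have [x' [bx' _] x'A] :=
    exists_tight_vertex R set0D' setTD' cupD' capD' accD' rho0' submD' AD'.
  by rewrite -x'A; apply: (sub _ bx').1.
have [x vx xA] :=
  exists_tight_vertex R set0D setTD cupD capD accD rho0 submD AD.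
by rewrite -xA; apply: (vert _ vx).1.1.
Qed.

Theorem theorem4p4 (R : realType) (E : finType)
    (D D' : {set {set E}}) (rho rho' : {set E} -> nat) :
  is_Umatroid D rho -> is_Umatroid D' rho' ->
  (lattice_extension D rho D' rho' <->
   sheared (@base_polyhedron E R D rho) (@base_polyhedron E R D' rho')).
Proof.
move=> UD UD'; split; first exact: sheared_of_lattice_extension.
move=> shD; split; first exact: lattice_subset_of_sheared shD.
exact: rank_eq_of_sheared shD.
Qed.
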